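(* Let $\pi_0:Z_0\to Z$ be the minimal resolution of a log terminal surface singularity, with exceptional curves $E_1,\dots,E_r$ generating $\mathbf{E}_0$, and $b_j=-E_j^2$. Let $g:\mathbf{E}_0\to\mathbb{Q}$, $g(E)=-E^2+\ell(E)$, with $\ell$ linear and $\ell(E_i)\le0$ for all $i$. Let $D=\sum_{j\in I}n_jE_j$ ($I\subseteq\{1,\dots,r\}$, $n_j>0$) be an effective exceptional divisor with connected support, put $m(D)=2+\sum_{j\in I}(b_j-2)$, and define $D=D_1+D_2$ as follows: if $m(D)=2$, $D_1=D$ and $D_2=0$; if $m(D)>2$, let $n=\min\{n_i: i\in I,\ b_i>2\}$, $D_1=\gcd(nD_{\mathrm{num}},D)$ and $D_2=D-D_1$. Then: (1) $D_1\cdot D_2\le0$; (2) if $g(D_{\mathrm{num}})>0$ then $g(D_1)>0$; (3) for each connected component $C$ of $D_2$, $m(C)<m(D)$.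
   Context: $D_{\mathrm{num}}$ is the numerical cycle of $\operatorname{supp}D$: the minimal nonzero effective divisor $F$ supported on $\operatorname{supp}D$ with $F\cdot E_i\le0$ for every $E_i\subseteq\operatorname{supp}D$. For effective divisors $F=\sum f_iE_i$, $F'=\sum f'_iE_i$, $\gcd(F,F')=\sum\min(f_i,f'_i)E_i$. For a connected effective exceptional divisor $C$ with support $\bigcup_{j\in I'}E_j$, $m(C)=2+\sum_{j\in I'}(b_j-2)$. *)

(* Combinatorial model of the minimal resolution of a
   log terminal surface singularity: exceptional curves E_0..E_{r-1}
   indexed by 'I_r, self-intersections -b i, dual graph adj. *)
From mathcomp Require Import all_boot all_order all_algebra.
Set Implicit Arguments. Unset Strict Implicit. Unset Printing Implicit Defensive.
Import Order.TTheory GRing.Theory Num.Theory.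
Local Open Scope ring_scope.

Definition inter (r : nat) (b : 'I_r -> nat) (adj : rel 'I_r) (i j : 'I_r) : int :=
  if i == j then - (b i)%:Z else if adj i j then 1 else 0.

(* intersection form on E_0 = integer combinations of the E_i *)
Definition idot (r : nat) (b : 'I_r -> nat) (adj : rel 'I_r)
    (x y : 'I_r -> int) : int :=
  \sum_(i < r) \sum_(j < r) x i * y j * inter b adj i j.

Definition ecurve (r : nat) (i : 'I_r) : 'I_r -> int := fun j => (j == i)%:Z.

(* effective divisors are nat-valued coefficient vectors *)
Definition toZ (r : nat) (D : 'I_r -> nat) : 'I_r -> int := fun i => (D i)%:Z.

(* g(E) = -E^2 + l(E), l linear given by its values l i = l(E_i) *)
Definition gfun (r : nat) (b : 'I_r -> nat) (adj : rel 'I_r) (l : 'I_r -> rat)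
    (x : 'I_r -> int) : rat :=
  - ((idot b adj x x)%:~R) + \sum_(i < r) (x i)%:~R * l i.

Definition supp (r : nat) (D : 'I_r -> nat) : {set 'I_r} := [set i | (0 < D i)%N].

Definition conn_set (r : nat) (adj : rel 'I_r) (S : {set 'I_r}) : Prop :=
  forall x y, x \in S -> y \in S ->
    connect [rel u v | [&& adj u v, u \in S & v \in S]] x y.

Definition is_component (r : nat) (adj : rel 'I_r) (S C : {set 'I_r}) : Prop :=
  [/\ C \subset S, C != set0, conn_set adj C &
      forall x y, x \in C -> y \in S -> adj x y -> y \in C].

Definition mval (r : nat) (b : 'I_r -> nat) (S : {set 'I_r}) : int :=
  2 + \sum_(j in S) ((b j)%:Z - 2).

(* Dual graph data of the minimal resolution of a log terminal surface
   singularity: smooth rational curves with b_i >= 2 (minimality), meeting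
   transversally in at most one point, forming a tree, negative definite
   intersection matrix, and all discrepancies a_i > -1, where
   K_{Z_0} = pi_0^* K_Z + sum a_j E_j is determined numerically by
   adjunction K.E_i = b_i - 2. *)
Definition lt_min_res (r : nat) (b : 'I_r -> nat) (adj : rel 'I_r) : Prop :=
  [/\ (0 < r)%N, (forall i, 2 <= b i)%N, symmetric adj & irreflexive adj] /\
  ((forall i j, connect adj i j) /\
   #|[set p : 'I_r * 'I_r | (val p.1 < val p.2)%N && adj p.1 p.2]| = r.-1) /\
  (forall x : 'I_r -> int, (exists i, x i != 0) -> idot b adj x x < 0) /\
  (exists a : 'I_r -> rat,
     (forall i, \sum_(j < r) a j * (inter b adj j i)%:~R = (b i)%:R - 2) /\
     (forall i, -1 < a i)).

Definition numcand (r : nat) (b : 'I_r -> nat) (adj : rel 'I_r)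
    (S : {set 'I_r}) (F : 'I_r -> nat) : Prop :=
  [/\ exists i, F i != 0%N, supp F \subset S &
      forall i, i \in S -> idot b adj (toZ F) (ecurve i) <= 0].

Definition is_numcycle (r : nat) (b : 'I_r -> nat) (adj : rel 'I_r)
    (S : {set 'I_r}) (F : 'I_r -> nat) : Prop :=
  numcand b adj S F /\
  forall F', numcand b adj S F' -> (forall i, F' i <= F i)%N ->
    forall i, F' i = F i.

Definition decomp (r : nat) (b : 'I_r -> nat) (D Dnum D1 D2 : 'I_r -> nat) : Prop :=
  (mval b (supp D) = 2 /\ (forall i, D1 i = D i) /\ (forall i, D2 i = 0%N)) \/
  (mval b (supp D) > 2 /\
   exists n : nat,
     [/\ (exists i, [&& i \in supp D, (2 < b i)%N & D i == n]),
         (forall i, i \in supp D -> (2 < b i)%N -> (n <= D i)%N),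
         (forall i, D1 i = minn (n * Dnum i) (D i)) &
         (forall i, D2 i = (D i - D1 i)%N)]).

From mathcomp Require Import all_boot all_order all_algebra.
From mathcomp Require Import ring lra zify.
Import Order.TTheory GRing.Theory Num.Theory.
Set Implicit Arguments. Unset Strict Implicit. Unset Printing Implicit Defensive.
Local Open Scope ring_scope.

(* Write chi2 x = -(x^2 + K.x) = 2 - 2 p_a(x). Log terminality (discrepancies
   a_j > -1) yields, for every effective y > 0, a curve E_j in supp y with
   (y + K).E_j < 0; peeling off such curves gives chi2 y >= 2, while Laufer's
   algorithm gives chi2 <= 2 for the numerical cycle Z and the reduced cycle
   E_S. Comparing Z = E_S + N with the discrepancy divisor then forces
   K.N = 0, i.e. Z = 1 on every curve with b_j > 2.
   Hence D_1 = min(nZ, D) (or D = min(NZ, D) for large N when m(D) = 2) is a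
   sum of layers min(kZ, D) - min((k-1)Z, D) that agree with Z on the curves
   with b_j > 2, so that a nonzero layer y has g(y) >= g(Z) > 0; and a layer
   meets the truncation below it nonpositively, since it lives where that
   truncation equals (k-1)Z. The same contact argument gives D_1.D_2 <= 0,
   and D_2 vanishes at a curve realising n, which lowers m. *)

Lemma ler_sum_term (R : numDomainType) (I : finType) (F : I -> R) i :
  (forall k, 0 <= F k) -> F i <= \sum_k F k.
Proof. by move=> F_ge0; rewrite (bigD1 i) //= lerDl sumr_ge0. Qed.

Lemma exists_common_denom (T : finType) (a : T -> rat) :
  exists2 d : int, 0 < d & exists al : T -> int, forall i, (al i)%:~R = d%:~R * a i.
Proof.
exists (\prod_i denq (a i)); first by apply: prodr_gt0 => i _; apply: denq_gt0.
exists (fun i => numq (a i) * \prod_(k | k != i) denq (a k)) => i.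
by rewrite [in RHS](bigD1 i) //= !intrM numqE; ring.
Qed.

Section Resolution.

(** * Intersection form *)

Variables (r : nat) (b : 'I_r -> nat) (adj : rel 'I_r).
Hypothesis adj_sym : symmetric adj.
Hypothesis adj_irr : irreflexive adj.

Definition dotE (x : 'I_r -> int) (j : 'I_r) : int :=
  \sum_(i < r) x i * inter b adj i j.

(* By adjunction, K.E_j = b_j - 2 for the canonical divisor K. *)
Definition Kdot (x : 'I_r -> int) : int := \sum_(i < r) x i * ((b i)%:Z - 2).

(* By Riemann-Roch, chi2 x = -(x^2 + K.x) = 2 chi(O_x) = 2 - 2 p_a(x). *)
Definition chi2 (x : 'I_r -> int) : int := - idot b adj x x - Kdot x.

Lemma inter_sym i j : inter b adj i j = inter b adj j i.
Proof. by rewrite /inter eq_sym; case: eqP => [->|_] //; rewrite adj_sym. Qed.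

Lemma inter_ge0 i j : i != j -> 0 <= inter b adj i j.
Proof. by rewrite /inter => /negbTE ->; case: (adj i j). Qed.

Lemma inter_adj i j : adj i j -> inter b adj i j = 1.
Proof.
by move=> aij; rewrite /inter aij; case: eqP aij => // ->; rewrite adj_irr.
Qed.

Lemma idotE x y : idot b adj x y = \sum_(j < r) y j * dotE x j.
Proof.
rewrite /idot exchange_big; apply: eq_bigr => j _; rewrite /dotE mulr_sumr.
by apply: eq_bigr => i _; ring.
Qed.

Lemma idotC x y : idot b adj x y = idot b adj y x.
Proof.
rewrite /idot exchange_big; apply: eq_bigr => j _; apply: eq_bigr => i _.
by rewrite inter_sym; ring.
Qed.

Lemma idotEl x y : idot b adj x y = \sum_(j < r) x j * dotE y j.
Proof. by rewrite idotC idotE. Qed.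

Lemma eq_idot x x' y y' : x =1 x' -> y =1 y' -> idot b adj x y = idot b adj x' y'.
Proof. by move=> ex ey; apply: eq_bigr => i _; apply: eq_bigr => j _; rewrite ex ey. Qed.

Lemma eq_dotE x x' j : x =1 x' -> dotE x j = dotE x' j.
Proof. by move=> ex; apply: eq_bigr => i _; rewrite ex. Qed.

Lemma eq_Kdot x x' : x =1 x' -> Kdot x = Kdot x'.
Proof. by move=> ex; apply: eq_bigr => i _; rewrite ex. Qed.

Lemma eq_chi2 x x' : x =1 x' -> chi2 x = chi2 x'.
Proof. by move=> ex; rewrite /chi2 (eq_idot ex ex) (eq_Kdot ex). Qed.

Lemma idotDl x y z :
  idot b adj (fun i => x i + y i) z = idot b adj x z + idot b adj y z.
Proof.
rewrite /idot -big_split; apply: eq_bigr => i _; rewrite -big_split.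
by apply: eq_bigr => j _ /=; ring.
Qed.

Lemma idotDr x y z :
  idot b adj z (fun i => x i + y i) = idot b adj z x + idot b adj z y.
Proof. by rewrite idotC idotDl !(idotC z). Qed.

Lemma dotED x y j : dotE (fun i => x i + y i) j = dotE x j + dotE y j.
Proof. by rewrite /dotE -big_split; apply: eq_bigr => i _ /=; ring. Qed.

Lemma dotEZ c x j : dotE (fun i => c * x i) j = c * dotE x j.
Proof. by rewrite /dotE mulr_sumr; apply: eq_bigr => i _; ring. Qed.

Lemma KdotD x y : Kdot (fun i => x i + y i) = Kdot x + Kdot y.
Proof. by rewrite /Kdot -big_split; apply: eq_bigr => i _ /=; ring. Qed.

Lemma chi2D x y :
  chi2 (fun i => x i + y i) = chi2 x + chi2 y - 2 * idot b adj x y.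
Proof. by rewrite /chi2 KdotD idotDl !idotDr (idotC y x); ring. Qed.

Lemma dotE0 j : dotE (fun=> 0) j = 0.
Proof. by rewrite /dotE big1 // => i _; rewrite mul0r. Qed.

Lemma chi2_0 : chi2 (fun=> 0) = 0.
Proof.
rewrite /chi2 /Kdot /idot !big1 ?oppr0 ?subr0 // => i _; rewrite ?mul0r //.
by rewrite big1 // => j _; rewrite !mul0r.
Qed.

Lemma sum_ecurve j : \sum_(i < r) ecurve j i = 1.
Proof. by rewrite (bigD1 j) //= big1 ?addr0 /ecurve ?eqxx // => i /negbTE ->. Qed.

Lemma sum_ecurve_mul (x : 'I_r -> int) j : \sum_(i < r) ecurve j i * x i = x j.
Proof.
rewrite (bigD1 j) //= big1 ?addr0 /ecurve ?eqxx ?mul1r // => i /negbTE ->.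
by rewrite mul0r.
Qed.

Lemma idot_ecurve x j : idot b adj x (ecurve j) = dotE x j.
Proof. by rewrite idotE (sum_ecurve_mul (dotE x)). Qed.

Lemma dotE_ecurve i j : dotE (ecurve i) j = inter b adj i j.
Proof. exact: (sum_ecurve_mul (inter b adj ^~ j)). Qed.

Lemma chi2_ecurve i : chi2 (ecurve i) = 2.
Proof.
rewrite /chi2 idot_ecurve dotE_ecurve /inter eqxx /Kdot.
by rewrite (sum_ecurve_mul (fun k => (b k)%:Z - 2)); ring.
Qed.

Lemma chi2D_ecurve x j :
  chi2 (fun i => x i + ecurve j i) = chi2 x + 2 - 2 * dotE x j.
Proof. by rewrite chi2D chi2_ecurve idot_ecurve; ring. Qed.

Lemma ler_dotE x y j : (forall i, x i <= y i) -> x j = y j -> dotE x j <= dotE y j.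
Proof.
move=> le_xy exy; apply: ler_sum => i _.
have [->|nij] := eqVneq i j; first by rewrite exy.
by apply: ler_wpM2r; [apply: inter_ge0|apply: le_xy].
Qed.

Lemma dotE_ge0 (x : 'I_r -> int) v : (forall i, 0 <= x i) -> x v = 0 ->
  0 <= dotE x v.
Proof. by move=> x_ge0 xv; rewrite -(dotE0 v) ler_dotE. Qed.

Lemma dotE_ge1_adj (x : 'I_r -> int) u v : (forall i, 0 <= x i) ->
  x v = 0 -> 1 <= x u -> adj u v -> 1 <= dotE x v.
Proof.
move=> x_ge0 xv xu auv; rewrite -(inter_adj auv) -dotE_ecurve ler_dotE //.
  by move=> i; rewrite /ecurve; case: eqP => [->|_].
by rewrite xv /ecurve; case: eqP auv => // ->; rewrite adj_irr.
Qed.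

(** * Rationality *)

Hypothesis negdef :
  forall x : 'I_r -> int, (exists i, x i != 0) -> idot b adj x x < 0.

Lemma negdef_le0 (x : 'I_r -> int) :
  (forall j, 0 < x j -> 0 <= dotE x j) -> forall j, x j <= 0.
Proof.
move=> hx j; rewrite leNgt; apply/negP => xj.
pose xp i := if 0 < x i then x i else 0.
have xp_nz : exists i, xp i != 0 by exists j; rewrite /xp xj gt_eqF.
have := negdef xp_nz; rewrite idotE ltNge => /negP; apply.
apply: sumr_ge0 => i _; rewrite /xp; case: ifP => xi; last by rewrite mul0r.
apply: mulr_ge0; first exact: ltW.
apply: le_trans (hx i xi) _; apply: ler_dotE; last by rewrite xi.
by move=> k; case: ifP => // /negbT; rewrite -leNgt.
Qed.

Hypothesis b_ge2 : forall i, (2 <= b i)%N.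

(* [a] is the discrepancy vector: K = sum_j a_j E_j numerically, and the
   singularity is log terminal iff every a_j > -1. *)
Variable a : 'I_r -> rat.
Hypothesis adjunction :
  forall i, \sum_(j < r) a j * (inter b adj j i)%:~R = (b i)%:R - 2.
Hypothesis a_gt : forall i, -1 < a i.

Lemma integral_discrepancy : exists d (al : 'I_r -> int),
  [/\ 0 < d, forall i, - d < al i <= 0 & forall i, dotE al i = d * ((b i)%:Z - 2)].
Proof.
have [d d_gt0 [al hal]] := exists_common_denom a.
have dotE_al i : dotE al i = d * ((b i)%:Z - 2).
  apply/eqP; rewrite -(eqr_int rat) /dotE rmorph_sum /=.
  under eq_bigr => j _ do rewrite intrM hal -mulrA.
  by rewrite -mulr_sumr adjunction intrM rmorphB.
have al_le0 : forall i, al i <= 0.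
  by apply: negdef_le0 => j _; rewrite dotE_al; have := b_ge2 j; nia.
exists d, al; split=> // i; rewrite al_le0 andbT -(ltr_int rat) hal rmorphN /=.
have := a_gt i; have : (0 : rat) < d%:~R by rewrite ltr0z.
nra.
Qed.

(* With A = sum_j a_j E_j, the divisor v = d (y + A) satisfies
   v.E_j = d (y + K).E_j and is positive on supp y, since a_j > -1. *)
Lemma exists_dotEK_lt0 (y : 'I_r -> int) : (forall i, 0 <= y i) ->
  (exists i, y i != 0) -> exists2 j, 0 < y j & dotE y j + ((b j)%:Z - 2) < 0.
Proof.
move=> y_ge0 [i yi]; have [d [al [d_gt0 al_bnd dotE_al]]] := integral_discrepancy.
have [j /andP[yj ltj]|none] :=
  pickP [pred j | (0 < y j) && (dotE y j + ((b j)%:Z - 2) < 0)].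
  by exists j.
pose v k := d * y k + al k.
suff /(_ i) : forall j, v j <= 0.
  have := al_bnd i; have : 0 < y i by rewrite lt_def yi y_ge0.
  by rewrite /v; nia.
apply: negdef_le0 => j vj.
have yj : 0 < y j by move: vj (al_bnd j); rewrite /v; nia.
have := none j; rewrite /= yj /= => /negbT; rewrite -leNgt => gej.
by rewrite /v dotED dotEZ dotE_al -mulrDr mulr_ge0 // ltW.
Qed.

Lemma chi2_ge2 (y : 'I_r -> int) : (forall i, 0 <= y i) ->
  (exists i, y i != 0) -> 2 <= chi2 y.
Proof.
have [n] : exists n : nat, \sum_i y i <= n%:Z.
  by exists (absz (\sum_i y i)); rewrite abszE ler_norm.
elim: n y => [|n IHn] y sum_le y_ge0 [i yi].
  by move: yi; rewrite eq_le (le_trans (ler_sum_term i y_ge0) sum_le) y_ge0.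
have [j yj ltj] := exists_dotEK_lt0 y_ge0 (ex_intro _ i yi).
pose y' k := y k - ecurve j k.
have y'_ge0 k : 0 <= y' k.
  by have := y_ge0 k; rewrite /y' /ecurve; case: eqP => [->|_] /=; lia.
have dotE_y' : dotE y' j = dotE y j + (b j)%:Z.
  rewrite (@eq_dotE y' (fun k => y k + (-1) * ecurve j k)) => [|k]; last first.
    by rewrite /y'; ring.
  by rewrite dotED dotEZ dotE_ecurve /inter eqxx; ring.
rewrite (@eq_chi2 y (fun k => y' k + ecurve j k)) => [|k]; last first.
  by rewrite /y' subrK.
rewrite chi2D_ecurve dotE_y'.
have [k /= y'k|y'0] := pickP [pred k | y' k != 0].
  suff : 2 <= chi2 y' by lia.
  apply: IHn y'_ge0 (ex_intro _ k y'k).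
  by move: sum_le; rewrite /y' sumrB sum_ecurve; lra.
have y'_eq0 : y' =1 fun=> 0 by move=> k; apply/eqP/negbFE/y'0.
by rewrite (eq_chi2 y'_eq0) chi2_0 -dotE_y' (eq_dotE _ y'_eq0) dotE0.
Qed.

(* Laufer's algorithm: chi2 (A' + E_j) = chi2 A' + 2 - 2 A'.E_j <= chi2 A'. *)
Lemma chi2_laufer (A B : 'I_r -> int) : (forall i, A i <= B i) ->
  (forall A' : 'I_r -> int, (forall i, A i <= A' i) -> (forall i, A' i <= B i) ->
     (exists i, A' i != B i) -> exists2 j, A' j < B j & 1 <= dotE A' j) ->
  chi2 B <= chi2 A.
Proof.
have [n] : exists n : nat, \sum_i (B i - A i) <= n%:Z.
  by exists (absz (\sum_i (B i - A i))); rewrite abszE ler_norm.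
have sub_ge0 A0 k : (forall i, A0 i <= B i) -> 0 <= B k - A0 k.
  by move=> le_A0B; rewrite subr_ge0.
elim: n A => [|n IHn] A sum_le le_AB step.
  suff eqBA : B =1 A by rewrite (eq_chi2 eqBA).
  move=> k; apply/eqP; rewrite eq_le le_AB andbT -subr_le0.
  exact: le_trans (ler_sum_term k (sub_ge0 A ^~ le_AB)) sum_le.
have [i /= nABi|eqAB] := pickP [pred i | A i != B i]; last first.
  by rewrite (@eq_chi2 B A) // => k; apply/esym/eqP/negbFE/eqAB.
have [j ltABj dotEj] := step A (fun=> lexx _) le_AB (ex_intro _ i nABi).
pose A2 k := A k + ecurve j k.
apply: (@le_trans _ _ (chi2 A2)); last by rewrite chi2D_ecurve; lia.
apply: IHn => [|k|A' le_A2A' le_A'B nA'B].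
- rewrite (eq_bigr (fun k => (B k - A k) - ecurve j k)) => [|k _]; last first.
    by rewrite /A2; ring.
  by rewrite sumrB sum_ecurve; move: sum_le; lra.
- by have := le_AB k; rewrite /A2 /ecurve; case: eqP => [->|_] /=; lia.
- apply: step le_A'B nA'B => k; apply: le_trans (le_A2A' k).
  by rewrite /A2 lerDl /ecurve; case: (k == j).
Qed.

Lemma conn_set_edge (S : {set 'I_r}) (P : pred 'I_r) x y :
  conn_set adj S -> x \in S -> y \in S -> P x -> ~~ P y ->
  exists u v, [/\ adj u v, u \in S, v \in S, P u & ~~ P v].
Proof.
move=> connS xS yS Px nPy.
have [[u v] /and5P[? ? ? ? ?]|none] :=
  pickP [pred p : 'I_r * 'I_r | [&& adj p.1 p.2, p.1 \in S, p.2 \in S, P p.1 & ~~ P p.2]].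
  by exists u, v.
case/negP: nPy; have /connectP[p path_p ->] := connS x y xS yS.
elim: p x path_p Px {xS} => [//|z p IHp] x /= /andP[/and3P[xz xS zS] path_p] Px.
apply: IHp path_p _; apply/negPn/negP => nPz.
by have := none (x, z); rewrite /= xz xS zS Px nPz.
Qed.

(** * The numerical cycle *)

Variables (D Z : 'I_r -> nat).
Hypothesis connD : conn_set adj (supp D).
Hypothesis numcycleZ : is_numcycle b adj (supp D) Z.

Lemma numcycle_eq0 i : i \notin supp D -> Z i = 0%N.
Proof.
case: numcycleZ => [[_ /subsetP suppZ _] _]; apply: contraNeq => Zi.
by apply: suppZ; rewrite inE lt0n.
Qed.

Lemma numcycle_dotE_le0 i : i \in supp D -> dotE (toZ Z) i <= 0.
Proof. by case: numcycleZ => [[_ _ dotZ] _] /dotZ; rewrite idot_ecurve. Qed.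

Lemma numcycle_exists_gt0 : exists2 x, x \in supp D & (0 < Z x)%N.
Proof.
case: numcycleZ => [[[x Zx] _ _] _]; exists x; last by rewrite lt0n.
by apply: contraTT Zx => /numcycle_eq0 ->.
Qed.

(* A curve E_v of supp D outside supp Z but adjacent to it has Z.E_v >= 1. *)
Lemma numcycle_gt0 i : i \in supp D -> (0 < Z i)%N.
Proof.
move=> iS; apply/negPn/negP => Zi; have [x xS Zx] := numcycle_exists_gt0.
have [u [v [auv _ vS Zu Zv]]] :=
  conn_set_edge (P := fun k => (0 < Z k)%N) connD xS iS Zx Zi.
have := numcycle_dotE_le0 vS; rewrite leNgt => /negP; apply.
by apply: (@lt_le_trans _ _ 1) => //; apply: dotE_ge1_adj auv; move: Zu Zv;
  rewrite /toZ; lia.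
Qed.

(* Laufer's algorithm from E_x: an A' < Z with A'.E_j <= 0 on all of supp D
   would be a candidate below Z. *)
Lemma chi2_numcycle : chi2 (toZ Z) <= 2.
Proof.
have [x xS Zx] := numcycle_exists_gt0; rewrite -(chi2_ecurve x).
apply: chi2_laufer => [i|A' le_xA' le_A'Z [i nA'Zi]].
  by rewrite /ecurve /toZ; case: eqP => [->|_] /=; lia.
have A'_ge0 k : 0 <= A' k by apply: le_trans (le_xA' k); rewrite /ecurve.
have [j /andP[jS dotEj]|none] := pickP [pred j | (j \in supp D) && (0 < dotE A' j)].
  exists j; last by lia.
  rewrite lt_neqAle le_A'Z andbT; apply/negP => /eqP eqj.
  by have := ler_dotE le_A'Z eqj; have := numcycle_dotE_le0 jS; lia.
pose F k := absz (A' k).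
have toZ_F : toZ F =1 A' by move=> k; rewrite /toZ gez0_abs.
have candF : numcand b adj (supp D) F.
  split.
  - by exists x; have := le_xA' x; rewrite /F /ecurve eqxx; lia.
  - apply/subsetP => k; rewrite inE; apply: contraTT => /numcycle_eq0 Zk.
    by have := le_A'Z k; have := A'_ge0 k; rewrite /F /toZ Zk; lia.
  - move=> k kS; rewrite idot_ecurve (eq_dotE _ toZ_F).
    by have := none k; rewrite /= kS /= leNgt => ->.
have le_FZ k : (F k <= Z k)%N.
  by have := le_A'Z k; have := A'_ge0 k; rewrite /F /toZ; lia.
case: numcycleZ => [_ /(_ F candF le_FZ i)].
by move: nA'Zi; rewrite /F /toZ; have := A'_ge0 i; lia.
Qed.

Definition reduced (S : {set 'I_r}) (k : 'I_r) : int := (k \in S)%:Z.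

(* An A' between E_x and E_S other than E_S misses a curve of S; by
   connectedness some such curve E_v meets supp A', and then A'.E_v >= 1. *)
Lemma chi2_reduced_cycle : chi2 (reduced (supp D)) <= 2.
Proof.
have [x xS _] := numcycle_exists_gt0; rewrite -(chi2_ecurve x).
apply: chi2_laufer => [i|A' le_xA' le_A'E [i nA'Ei]].
  by rewrite /ecurve /reduced; case: eqP => [->|_] /=; rewrite ?xS.
have A'_ge0 k : 0 <= A' k by apply: le_trans (le_xA' k); rewrite /ecurve.
have [iS A'i] : i \in supp D /\ ~~ (0 < A' i).
  by move: nA'Ei (le_A'E i) (A'_ge0 i); rewrite /reduced; case: (i \in supp D); lia.
have A'x : 0 < A' x by have := le_xA' x; rewrite /ecurve eqxx; lia.
have [u [v [auv _ vS A'u A'v]]] :=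
  conn_set_edge (P := fun k => 0 < A' k) connD xS iS A'x A'i.
exists v; first by rewrite /reduced vS; move: A'v (A'_ge0 v); lia.
by apply: dotE_ge1_adj auv => //; move: A'u A'v (A'_ge0 v); lia.
Qed.

(* With A = sum_j a_j E_j, d (Z.E_S + K.Z) = Z.(d E_S + d A) is the sum of
   the terms (d [k in S] + d a_k) Z.E_k: all are <= 0 (for k outside S,
   Z.E_k >= 0 and a_k <= 0), and one is < 0 by negative definiteness. *)
Lemma numcycle_dot_reduced_lt0 :
  idot b adj (toZ Z) (reduced (supp D)) + Kdot (toZ Z) < 0.
Proof.
have [d [al [d_gt0 al_bnd dotE_al]]] := integral_discrepancy.
pose f m := d * (reduced (supp D) m * dotE (toZ Z) m) + al m * dotE (toZ Z) m.
have f_le0 m : f m <= 0.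
  rewrite /f /reduced; case: (boolP (m \in supp D)) => mS /=.
    by have := numcycle_dotE_le0 mS; have := al_bnd m; nia.
  have := dotE_ge0 (x := toZ Z) (fun=> erefl) (congr1 Posz (numcycle_eq0 mS)).
  by have := al_bnd m; nia.
have [k /andP[kS ltk]|none] :=
  pickP [pred k | (k \in supp D) && (dotE (toZ Z) k < 0)]; last first.
  have [x xS Zx] := numcycle_exists_gt0.
  have Zx0 : toZ Z x != 0 by rewrite /toZ; lia.
  have := negdef (ex_intro _ x Zx0); rewrite idotEl ltNge => /negP; case.
  apply: sumr_ge0 => k _; case: (boolP (k \in supp D)) => kS.
    by have := none k; rewrite /= kS /= => /negbT; rewrite -leNgt; apply: mulr_ge0.
  by rewrite /toZ (numcycle_eq0 kS) mul0r.
have fk : f k < 0 by rewrite /f /reduced kS /=; have := al_bnd k; nia.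
have KZ : d * Kdot (toZ Z) = \sum_m al m * dotE (toZ Z) m.
  rewrite -idotE idotEl /Kdot mulr_sumr.
  by apply: eq_bigr => m _; rewrite dotE_al; ring.
suff lt0 : \sum_m f m < 0.
  by rewrite -(pmulr_rlt0 _ d_gt0) mulrDr KZ idotE mulr_sumr -big_split; exact: lt0.
rewrite (bigD1 k) //=; have : \sum_(m | m != k) f m <= 0 by apply: sumr_le0.
lra.
Qed.

(* For Z = E_S + N, chi2 Z <= 2 = chi2 E_S and chi2 N >= 2 give E_S.N >= 1,
   so numcycle_dot_reduced_lt0 leaves K.N <= 0, i.e. N = 0 where b_j > 2. *)
Lemma numcycle_eq1 i : i \in supp D -> (2 < b i)%N -> Z i = 1%N.
Proof.
move=> iS bi; set E := reduced (supp D); pose N k := toZ Z k - E k.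
have N_ge0 k : 0 <= N k.
  rewrite /N /E /reduced /toZ; case: (boolP (k \in supp D)) => kS /=.
    by have := numcycle_gt0 kS; lia.
  by rewrite subr0.
have eZ : toZ Z =1 fun k => E k + N k by move=> k; rewrite /N addrC subrK.
suff : N i = 0 by rewrite /N /E /reduced iS /toZ; lia.
have [k /= Nk|N0] := pickP [pred k | N k != 0]; last exact/eqP/negbFE/N0.
have [x xS _] := numcycle_exists_gt0.
have chiE : chi2 E = 2.
  apply/eqP; rewrite eq_le chi2_reduced_cycle /=.
  by apply: chi2_ge2 => [m|]; [rewrite /E /reduced | exists x; rewrite /E /reduced xS].
have chiN := chi2_ge2 N_ge0 (ex_intro _ k Nk).
have := chi2_numcycle; rewrite (eq_chi2 eZ) chi2D chiE => chiZ.
have := numcycle_dot_reduced_lt0; rewrite -/E (eq_idot eZ (frefl E)) (eq_Kdot eZ).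
rewrite idotDl KdotD (idotC N E) => lt0.
have chiE' : - idot b adj E E - Kdot E = 2 := chiE.
have KN_le0 : Kdot N <= 0 by lia.
have KN_ge : N i * ((b i)%:Z - 2) <= Kdot N.
  by apply: ler_sum_term => m; have := N_ge0 m; have := b_ge2 m; nia.
by have := N_ge0 i; nia.
Qed.

(** * Truncations of D *)

Variable l : 'I_r -> rat.
Hypothesis l_le0 : forall i, l i <= 0.

Lemma eq_gfun x x' : x =1 x' -> gfun b adj l x = gfun b adj l x'.
Proof.
move=> ex; rewrite /gfun (eq_idot ex ex); congr (_ + _).
by apply: eq_bigr => i _; rewrite ex.
Qed.

Lemma gfunD x y : gfun b adj l (fun i => x i + y i) =
  gfun b adj l x + gfun b adj l y - 2 * (idot b adj x y)%:~R.
Proof.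
rewrite /gfun idotDl !idotDr (idotC y x) !rmorphD /=.
rewrite (eq_bigr (fun i => (x i)%:~R * l i + (y i)%:~R * l i)) ?big_split /=.
  by ring.
by move=> i _; rewrite rmorphD mulrDl.
Qed.

Lemma gfun0 : gfun b adj l (fun=> 0) = 0.
Proof.
rewrite /gfun /idot !big1 ?oppr0 ?add0r // => i _; rewrite ?mul0r //.
by rewrite big1 // => j _; rewrite !mul0r.
Qed.

(* y and Z agree on the curves with b_j > 2, so K.y = K.Z, and
   chi2 y >= 2 >= chi2 Z turns this into -y^2 >= -Z^2. *)
Lemma gfun_numcycle_le (y : 'I_r -> nat) : (forall i, y i <= Z i)%N ->
  (exists i, y i != 0%N) -> (forall j, (2 < b j)%N -> y j = Z j) ->
  gfun b adj l (toZ Z) <= gfun b adj l (toZ y).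
Proof.
move=> le_yZ [i yi] eq_yZ.
have chi_y : 2 <= chi2 (toZ y).
  by apply: chi2_ge2 => //; exists i; rewrite /toZ; lia.
have K_eq : Kdot (toZ y) = Kdot (toZ Z).
  apply: eq_bigr => j _; case: (ltnP 2 (b j)) => bj; first by rewrite /toZ eq_yZ.
  have -> : (b j)%:Z - 2 = 0 by have := b_ge2 j; lia.
  by rewrite !mulr0.
have := chi2_numcycle; rewrite /chi2 -K_eq => chi_Z; move: chi_y; rewrite /chi2.
rewrite /gfun => chi_y; apply: lerD; first by rewrite -!rmorphN /= ler_int; lia.
apply: ler_sum => k _; have := l_le0 k.
have : (y k)%:~R <= (Z k)%:~R :> rat by rewrite ler_int lez_nat.
by rewrite /toZ; nra.
Qed.

Lemma idot_le0_contact (x y : 'I_r -> int) (t : int) : 0 <= t ->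
  (forall i, x i <= t * toZ Z i) -> (forall i, 0 <= y i) ->
  (forall i, 0 < y i -> i \in supp D /\ x i = t * toZ Z i) ->
  idot b adj x y <= 0.
Proof.
move=> t_ge0 le_x y_ge0 contact; rewrite idotE; apply: sumr_le0 => i _.
have [yi|yi] := ltP 0 (y i); last first.
  have -> : y i = 0 by apply/eqP; rewrite eq_le yi y_ge0.
  by rewrite mul0r.
have [iS eqi] := contact i yi; have := ler_dotE le_x eqi; rewrite dotEZ.
by have := numcycle_dotE_le0 iS; nia.
Qed.

Definition trunc (k : nat) (i : 'I_r) : nat := minn (k * Z i) (D i).

Lemma idot_trunc_le0 k :
  idot b adj (toZ (trunc k)) (toZ (fun i => D i - trunc k i)%N) <= 0.
Proof.
apply: (idot_le0_contact (t := k%:Z)) => // i; rewrite /toZ /trunc; first lia.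
by move=> lt_i; split; [rewrite inE|]; lia.
Qed.

(* g(trunc (N + 1)) = g(trunc N) + g(y) - 2 trunc N . y, where y is the
   next layer: each layer y is either 0 or satisfies g(y) >= g(Z). *)
Lemma gfun_trunc_gt0 N : (0 < N)%N ->
  (forall j, (2 < b j)%N -> (N * Z j <= D j)%N) ->
  0 < gfun b adj l (toZ Z) -> 0 < gfun b adj l (toZ (trunc N)).
Proof.
move=> + + gZ; elim: N => [//|[|N] IHN] _ exactN.
  apply: lt_le_trans gZ _; apply: gfun_numcycle_le => [i||j bj].
  - by rewrite /trunc; lia.
  - have [x] := numcycle_exists_gt0; rewrite inE => Dx Zx.
    by exists x; rewrite /trunc; lia.
  - by have := exactN j bj; rewrite /trunc; lia.
pose y i := (trunc N.+2 i - trunc N.+1 i)%N.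
have eX : toZ (trunc N.+2) =1 fun i => toZ (trunc N.+1) i + toZ y i.
  by move=> i; rewrite /toZ /y /trunc; lia.
have gX : 0 < gfun b adj l (toZ (trunc N.+1)).
  by apply: IHN => // j bj; have := exactN j bj; nia.
have cross : idot b adj (toZ (trunc N.+1)) (toZ y) <= 0.
  apply: (idot_le0_contact (t := N.+1%:Z)) => // i; rewrite /toZ /y /trunc.
    by lia.
  by move=> lt_i; split; [rewrite inE|]; lia.
have gy : 0 <= gfun b adj l (toZ y).
  have [i /= yi|y0] := pickP [pred i | y i != 0%N]; last first.
    rewrite (@eq_gfun _ (fun=> 0)) ?gfun0 // => i.
    by have := y0 i; rewrite /= /toZ => /negbFE /eqP ->.
  apply: le_trans (ltW gZ) _; apply: gfun_numcycle_le => [k||j bj].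
  - by rewrite /y /trunc; lia.
  - by exists i.
  - by have := exactN j bj; rewrite /y /trunc; nia.
have : (idot b adj (toZ (trunc N.+1)) (toZ y))%:~R <= 0 :> rat.
  by rewrite lerz0.
by rewrite (eq_gfun eX) gfunD; lra.
Qed.

Lemma mval_lt (A B : {set 'I_r}) i : A \subset B -> i \in B -> i \notin A ->
  (2 < b i)%N -> mval b A < mval b B.
Proof.
move=> AB iB iA bi; rewrite /mval ltrD2l [ltRHS](big_setID A) /= (setIidPr AB).
have iBA : i \in B :\: A by rewrite inE iA iB.
rewrite (bigD1 i iBA) /=.
have : 0 <= \sum_(j in B :\: A | j != i) ((b j)%:Z - 2).
  by apply: sumr_ge0 => j _; have := b_ge2 j; lia.
have : 0 < (b i)%:Z - 2 by lia.
lra.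
Qed.

Lemma decomp_trunc D1 D2 : decomp b D Z D1 D2 ->
  exists N, [/\ (0 < N)%N, D1 =1 trunc N, D2 =1 (fun i => D i - trunc N i)%N &
               forall j, (2 < b j)%N -> (N * Z j <= D j)%N].
Proof.
have [x xS _] := numcycle_exists_gt0.
have Dx : (0 < D x)%N by move: xS; rewrite inE.
case=> [[m2 [eD1 eD2]]|[_ [n [[i0 /and3P[i0S bi0 /eqP Di0]] n_min eD1 eD2]]]].
  pose N := (\sum_i D i)%N.
  have D_le i : (D i <= N)%N by rewrite /N (bigD1 i) //= leq_addr.
  have trunc_D i : trunc N i = D i.
    rewrite /trunc; case: (boolP (i \in supp D)) => iS.
      by have := numcycle_gt0 iS; have := D_le i; nia.
    by move: iS; rewrite inE -eqn0Ngt => /eqP ->; rewrite minn0.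
  exists N; split=> [|i|i|j bj]; rewrite ?eD1 ?eD2 ?trunc_D ?subnn //.
    exact: leq_trans Dx (D_le x).
  have jS : j \notin supp D.
    apply/negP => jS; have := mval_lt (sub0set _) jS (negbT (in_set0 j)) bj.
    by rewrite m2 /mval big_set0 addr0 ltxx.
  by rewrite numcycle_eq0 // muln0.
exists n; split=> [|i|i|j bj]; rewrite ?eD2 ?eD1 //.
  by rewrite -Di0; move: i0S; rewrite inE.
case: (boolP (j \in supp D)) => jS; last by rewrite numcycle_eq0 // muln0.
by rewrite numcycle_eq1 // muln1 n_min.
Qed.

Lemma mval_component_lt D1 D2 C : decomp b D Z D1 D2 ->
  is_component adj (supp D2) C -> mval b C < mval b (supp D).
Proof.
move=> dec [C_D2 /set0Pn[c cC] _ _].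
case: dec => [[_ [_ eD2]]|[_ [n [[i0 /and3P[i0S bi0 /eqP Di0]] _ eD1 eD2]]]].
  by have := subsetP C_D2 c cC; rewrite inE eD2.
have D2_D : supp D2 \subset supp D.
  by apply/subsetP => i; rewrite !inE eD2; lia.
have i0C : i0 \notin C.
  apply/negP => /(subsetP C_D2); rewrite inE eD2 eD1 Di0.
  by have := numcycle_gt0 i0S; nia.
exact: mval_lt (subset_trans C_D2 D2_D) i0S i0C bi0.
Qed.

End Resolution.

Theorem mainTheorem13 (r : nat) (b : 'I_r -> nat) (adj : rel 'I_r)
    (l : 'I_r -> rat) (D Dnum D1 D2 : 'I_r -> nat) :
  lt_min_res b adj ->
  (forall i, l i <= 0) ->
  supp D != set0 -> conn_set adj (supp D) ->
  is_numcycle b adj (supp D) Dnum ->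
  decomp b D Dnum D1 D2 ->
  [/\ idot b adj (toZ D1) (toZ D2) <= 0,
      0 < gfun b adj l (toZ Dnum) -> 0 < gfun b adj l (toZ D1) &
      forall C : {set 'I_r}, is_component adj (supp D2) C ->
        mval b C < mval b (supp D)].
Proof.
move=> [[_ b_ge2 adj_sym adj_irr] [_ [negdef [a [adjunction a_gt]]]]] l_le0 _.
move=> connD numcycleZ dec.
have [N [N_gt0 eD1 eD2 exactN]] :=
  decomp_trunc adj_sym adj_irr negdef b_ge2 adjunction a_gt connD numcycleZ dec.
have eZ1 : toZ D1 =1 toZ (trunc D Dnum N) by move=> i; rewrite /toZ eD1.
have eZ2 : toZ D2 =1 toZ (fun i => D i - trunc D Dnum N i)%N.
  by move=> i; rewrite /toZ eD2.
split.
- by rewrite (eq_idot b adj eZ1 eZ2) (idot_trunc_le0 numcycleZ).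
- rewrite (eq_gfun b adj l eZ1).
  exact: (gfun_trunc_gt0 adj_sym negdef b_ge2 adjunction a_gt numcycleZ l_le0
    N_gt0 exactN).
- by move=> C; apply: (mval_component_lt adj_irr b_ge2 connD numcycleZ dec).
Qed.
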